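(* Assume one of the following holds: (i) $\mathcal A^\infty\subset\mathcal X_+$ and there exists no scalable arbitrage opportunity; (ii) $\mathcal P^\infty\subset\mathbb R^N_+$, $V_1(x)\in\mathcal X_+$ for every $x\in\mathbb R^N_+$, and there exists no scalable arbitrage opportunity; (iii) $\mathcal P$ is bounded. Then there exists no scalable acceptable deal. Under (iii), moreover, $\mathcal L=\{0\}$.
   Context: Standing setup: Let $\mathcal{X}$ be a real topological vector space partially ordered by a convex cone $\mathcal{X}_+\subset\mathcal X$; write $X\ge Y$ iff $X-Y\in\mathcal X_+$. Fix $N\in\mathbb N$ and: a set $\mathcal P\subset\mathbb R^N$ with $0\in\mathcal P$; a function $V_0:\mathbb R^N\to\mathbb R$ with $V_0(0)=0$ and $V_0(x)\ge -V_0(-x)$ for all $x\in\mathbb R^N$; a map $V_1:\mathbb R^N\to\mathcal X$ with $V_1(0)=0$ and $V_1(x)\le -V_1(-x)$ for all $x\in\mathbb R^N$; a set $\mathcal A\subset\mathcal X$ with $0\in\mathcal A$ and $\mathcal A+\mathcal X_+\subset\mathcal A$. Asymptotic notions: for a nonempty set $C$ in a topological vector space, $C^\infty=\{X:\exists\text{ nets }(X_\alpha)\subset C,\ (\lambda_\alpha)\subset[0,\infty),\ \lambda_\alpha\to0,\ \lambda_\alpha X_\alpha\to X\}$. For $f:\mathbb R^N\to\mathbb R$, its asymptotic function $f^\infty:\mathbb R^N\to[-\infty,\infty]$ is the function whose epigraph $\{(x,m)\in\mathbb R^N\times\mathbb R: f^\infty(x)\le m\}$ equals $(\operatorname{epi}f)^\infty$,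 where $\operatorname{epi}f=\{(x,m)\in\mathbb R^N\times\mathbb R: f(x)\le m\}$. A portfolio $x\in\mathbb R^N$ is a scalable acceptable deal if $x\in\mathcal P^\infty$, $V_0^\infty(x)\le0$ and $V_1(x)\in\mathcal A^\infty\setminus\{0\}$; it is a scalable arbitrage opportunity if $x\in\mathcal P^\infty$, $V_0^\infty(x)\le0$ and $V_1(x)\in(\mathcal X_+)^\infty\setminus\{0\}$. Define $\mathcal L=\{x\in\mathcal P^\infty: V_0^\infty(x)\le0,\ V_1(x)\in\mathcal A^\infty\}$. $\mathbb R^N_+$ denotes vectors with nonnegative components. *)

From HB Require Import structures.
From mathcomp Require Import all_boot all_order all_algebra.
From mathcomp Require Import all_classical all_reals all_analysis.
Set Implicit Arguments. Unset Strict Implicit. Unset Printing Implicit Defensive.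
Import Order.TTheory GRing.Theory Num.Theory.
Import numFieldNormedType.Exports.
Local Open Scope classical_set_scope.
Local Open Scope ring_scope.

Record directed_set := DirectedSet {
  dir_car :> Type;
  dir_le : dir_car -> dir_car -> Prop;
  dir_refl : forall i, dir_le i i;
  dir_trans : forall i j k, dir_le i j -> dir_le j k -> dir_le i k;
  dir_ub : forall i j, exists k, dir_le i k /\ dir_le j k;
  dir_inhab : inhabited dir_car }.

Definition net_cvg (T : nbhsType) (I : directed_set) (f : I -> T) (x : T) :=
  forall U, nbhs x U -> exists i0 : I, forall i, dir_le i0 i -> U (f i).

Definition asymp_cone (R : realType) (V : topologicalLmodType R) (C : set V) : set V :=
  [set X | exists (I : directed_set) (x : I -> V) (lam : I -> R),
     (forall i, C (x i)) /\ (forall i, 0 <= lam i) /\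
     net_cvg (lam : I -> R^o) 0 /\ net_cvg (fun i => lam i *: x i) X].

Definition epi (R : realType) (N : nat) (f : 'rV[R]_N -> R) : set ('rV[R]_N * R^o) :=
  [set p | f p.1 <= p.2].

(* The asymptotic function f^oo is defined by epi f^oo = (epi f)^oo; hence
   "f^oo(x) <= m" (m real) means (x, m) \in (epi f)^oo. *)
Definition asymp_fun_le (R : realType) (N : nat) (f : 'rV[R]_N -> R) (x : 'rV[R]_N) (m : R) :=
  @asymp_cone R (('rV[R]_N * R^o)%type : tvsType R) (epi f) (x, (m : R^o)).

Definition orthant (R : realType) (N : nat) : set 'rV[R]_N :=
  [set x | forall i, 0 <= x ord0 i].

Definition pointed_convex_cone (R : realType) (X : lmodType R) (K : set X) :=
  K 0 /\ (forall x y, K x -> K y -> K (x + y)) /\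
  (forall (l : R) x, 0 <= l -> K x -> K (l *: x)) /\
  (forall x, K x -> K (- x) -> x = 0).

Definition le_cone (R : realType) (X : lmodType R) (K : set X) (x y : X) := K (y - x).

Definition scalable_acceptable_deal (R : realType) (N : nat) (X : topologicalLmodType R)
  (P : set 'rV[R]_N) (V0 : 'rV[R]_N -> R) (V1 : 'rV[R]_N -> X) (A : set X) x :=
  asymp_cone P x /\ asymp_fun_le V0 x 0 /\ (asymp_cone A `\ 0) (V1 x).

Definition scalable_arbitrage (R : realType) (N : nat) (X : topologicalLmodType R)
  (P : set 'rV[R]_N) (V0 : 'rV[R]_N -> R) (V1 : 'rV[R]_N -> X) (Xp : set X) x :=
  asymp_cone P x /\ asymp_fun_le V0 x 0 /\ (asymp_cone Xp `\ 0) (V1 x).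

Definition Lset (R : realType) (N : nat) (X : topologicalLmodType R)
  (P : set 'rV[R]_N) (V0 : 'rV[R]_N -> R) (V1 : 'rV[R]_N -> X) (A : set X) : set 'rV[R]_N :=
  [set x | asymp_cone P x /\ asymp_fun_le V0 x 0 /\ asymp_cone A (V1 x)].

(* Under (i) or (ii) every asymptotic direction of [A] hit by [V1 x] lies in the
   cone [X_+], and a cone is contained in its own asymptotic cone, so a scalable
   acceptable deal would be a scalable arbitrage opportunity.  Under (iii) a
   bounded set has asymptotic cone {0}: if [x_a] stays in a ball of radius [M]
   then [|lam_a x_a| <= lam_a M -> 0]; hence the only candidate deal is 0, whose
   payoff [V1 0 = 0] is excluded, and [L] reduces to {0}. *)
From HB Require Import structures.
From mathcomp Require Import all_boot all_order all_algebra.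
From mathcomp Require Import all_classical all_reals all_analysis.
Import Order.TTheory GRing.Theory Num.Theory.
Import numFieldNormedType.Exports.
Local Open Scope classical_set_scope.
Local Open Scope ring_scope.

Definition nat_directed_set : directed_set.
Proof.
refine (@DirectedSet nat (fun i j => (i <= j)%N) leqnn _ _ (inhabits 0%N)).
- by move=> i j k; apply: leq_trans.
- by move=> i j; exists (maxn i j); rewrite leq_maxl leq_maxr.
Defined.

Lemma net_cvg_cst (T : topologicalType) (I : directed_set) (x : T) :
  net_cvg (fun _ : I => x) x.
Proof.
move=> U /nbhs_singleton Ux; case: (dir_inhab I) => i.
by exists i.
Qed.

Lemma net_cvg_seq (T : topologicalType) (u : nat -> T) (x : T) :
  u @ \oo --> x -> net_cvg (u : nat_directed_set -> T) x.
Proof. by move=> ux U /ux [n0 _ u_near]; exists n0 => n; apply: u_near. Qed.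

Section AsymptoticCone.
Variables (R : realType) (V : topologicalLmodType R).

Lemma asymp_cone0 (C : set V) : C !=set0 -> asymp_cone C 0.
Proof.
move=> [x Cx]; exists nat_directed_set, (fun=> x), (fun=> 0).
do 3 split => //; first exact: net_cvg_cst.
under [X in net_cvg X]funext do rewrite scale0r.
exact: net_cvg_cst.
Qed.

Lemma cone_sub_asymp_cone (K : set V) :
  (forall (l : R) x, 0 < l -> K x -> K (l *: x)) -> K `<=` asymp_cone K.
Proof.
move=> scaleK k Kk.
exists nat_directed_set, (fun n => (harmonic n)^-1 *: k), (@harmonic R).
split; first by move=> n; apply: scaleK; rewrite ?invr_gt0 ?harmonic_gt0.
split; first by move=> n; apply: ltW; apply: harmonic_gt0.
split; first exact: net_cvg_seq cvg_harmonic.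
suff -> : (fun n => harmonic n *: ((harmonic n)^-1 *: k)) = fun=> k.
  exact: net_cvg_cst.
by apply/funext => n; rewrite scalerA divff ?scale1r // lt0r_neq0 ?harmonic_gt0.
Qed.

End AsymptoticCone.

Lemma asymp_cone_bounded {R : realType} {V : normedModType R} {P : set V} :
  bounded_set P -> asymp_cone P `<=` [set 0].
Proof.
move=> /ex_strict_bound_gt0 [M M0 boundP] X [I [x [lam [Px [lam0 [lam_cvg x_cvg]]]]]].
apply/eqP; rewrite -normr_le0; apply/ler_addgt0Pr => e e0; rewrite add0r.
have e2 : 0 < e / 2 by rewrite divr_gt0.
have [i0 near_X] := x_cvg _ (nbhsx_ballx X _ e2).
have [i1 small_lam] := lam_cvg _ (nbhsx_ballx (0 : R^o) _ (divr_gt0 e2 M0)).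
have [i [i0i i1i]] := dir_ub i0 i1.
have := near_X i i0i; have := small_lam i i1i.
rewrite -!ball_normE /= sub0r normrN ger0_norm // => lam_lt X_near.
have scaled_small : `|lam i *: x i| <= e / 2.
  rewrite normrZ ger0_norm //.
  apply: le_trans (ler_wpM2l (lam0 i) (ltW (boundP _ (Px i)))) _.
  by rewrite -ler_pdivlMr // ltW.
rewrite -[X](subrK (lam i *: x i)) [e]splitr.
by apply: le_trans (ler_normD _ _) _; rewrite lerD // ltW.
Qed.

Section ScalableDeals.
Variables (R : realType) (X : topologicalLmodType R) (N : nat).
Variables (P : set 'rV[R]_N) (V0 : 'rV[R]_N -> R) (V1 : 'rV[R]_N -> X) (A : set X).

Lemma no_acceptable_deal_of_no_arbitrage (Xp : set X) :
  pointed_convex_cone Xp ->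
  (forall x, scalable_acceptable_deal P V0 V1 A x -> Xp (V1 x)) ->
  ~ (exists x, scalable_arbitrage P V0 V1 Xp x) ->
  ~ exists x, scalable_acceptable_deal P V0 V1 A x.
Proof.
move=> [_ [_ [scaleXp _]]] deal_Xp no_arb [x deal]; apply: no_arb; exists x.
have [Px [V0x [_ V1x_neq0]]] := deal.
do 2 split => //; split => //.
apply: cone_sub_asymp_cone (deal_Xp x deal) => l y /ltW; apply: scaleXp.
Qed.

(* Naming [V] spares the unifier a costly comparison of the two canonical
   topologies on row vectors (from [tvsType] and from [normedModType]). *)
Lemma asymp_cone_rV_bounded : bounded_set P -> asymp_cone P `<=` [set 0].
Proof. exact: (@asymp_cone_bounded R 'rV[R]_N). Qed.

Lemma no_acceptable_deal_bounded :
  V1 0 = 0 -> bounded_set P -> ~ exists x, scalable_acceptable_deal P V0 V1 A x.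
Proof.
move=> V10 bP [x [/(asymp_cone_rV_bounded bP) -> [_ [_ V10_neq0]]]].
by apply: V10_neq0; rewrite V10.
Qed.

Lemma Lset_bounded : P 0 -> V0 0 = 0 -> V1 0 = 0 -> A 0 ->
  bounded_set P -> Lset P V0 V1 A = [set 0].
Proof.
move=> P0 V00 V10 A0 bP; apply/seteqP; split => x /=.
  by move=> [/(asymp_cone_rV_bounded bP)].
move=> ->; split; first exact: asymp_cone0 (ex_intro _ 0 P0).
split; first by apply: asymp_cone0; exists (0, 0%R : R^o); rewrite /epi /= V00.
by rewrite V10; apply: asymp_cone0; exists 0.
Qed.

End ScalableDeals.

Theorem mainTheorem8 (R : realType) (X : topologicalLmodType R) (Xp : set X)
  (N : nat) (P : set 'rV[R]_N) (V0 : 'rV[R]_N -> R) (V1 : 'rV[R]_N -> X) (A : set X) :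
  pointed_convex_cone Xp ->
  P 0 ->
  V0 0 = 0 -> (forall x, V0 x >= - V0 (- x)) ->
  V1 0 = 0 -> (forall x, le_cone Xp (V1 x) (- V1 (- x))) ->
  A 0 -> (forall a k, A a -> Xp k -> A (a + k)) ->
  ((asymp_cone A `<=` Xp /\ ~ (exists x, scalable_arbitrage P V0 V1 Xp x))
   \/ (asymp_cone P `<=` @orthant R N /\ (forall x, @orthant R N x -> Xp (V1 x)) /\
       ~ (exists x, scalable_arbitrage P V0 V1 Xp x))
   \/ bounded_set P) ->
  ~ (exists x, scalable_acceptable_deal P V0 V1 A x) /\
  (bounded_set P -> Lset P V0 V1 A = [set 0]).
Proof.
move=> Xp_cone P0 V00 _ V10 _ A0 _ hyp.
split; last exact: Lset_bounded.
case: hyp => [[A_Xp no_arb] | [[P_orth [V1_orth no_arb]] | bP]].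
- apply: no_acceptable_deal_of_no_arbitrage Xp_cone _ no_arb.
  by move=> x [_ [_ [/A_Xp]]].
- apply: no_acceptable_deal_of_no_arbitrage Xp_cone _ no_arb.
  by move=> x [/P_orth/V1_orth].
- exact: no_acceptable_deal_bounded.
Qed.
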